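(* Let $N\geq 1$ be an integer. Then for all $0<x<\pi/2$, \[ 3+\sum_{j=2}^{N}\frac{(2^{2j}-4)|B_{2j}|}{(2j)!}x^{2j}+\rho_N x^{2N+1}\tan x<2\left(\frac{x}{\sin x}\right)+\frac{x}{\tan x}<3+\sum_{j=2}^{N}\frac{(2^{2j}-4)|B_{2j}|}{(2j)!}x^{2j}+\varrho_N x^{2N+1}\tan x, \] with the best possible constants $\rho_N=0$ and $\varrho_N=\dfrac{4(2^{2N}-1)|B_{2N+2}|}{(2N+2)!}$.
   Context: The Bernoulli numbers $B_n$ are defined by $\frac{t}{e^t-1}=\sum_{n=0}^\infty B_n\frac{t^n}{n!}$ for $|t|<2\pi$. An empty sum is understood to be zero. *)

From Stdlib Require Import Reals Lra Lia Arith Factorial.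
Open Scope R_scope.

(* The Bernoulli numbers, characterised as in the paper by their generating
   function: t/(e^t - 1) = sum_{n>=0} B_n t^n / n!  for 0 < |t| < 2*pi
   (at t = 0 the left side is understood as its limit 1, which is then
   forced by continuity of the power series). *)
Definition bernoulli_gf (B : nat -> R) : Prop :=
  forall t : R, t <> 0 -> Rabs t < 2 * PI ->
    infinite_sum (fun n => B n * t ^ n / INR (fact n)) (t / (exp t - 1)).

Fixpoint sum_lt (n : nat) (f : nat -> R) : R :=
  match n with
  | O => 0
  | S k => sum_lt k f + f k
  end.

Definition partial_sum (B : nat -> R) (N : nat) (x : R) : R :=
  sum_lt (N - 1) (fun i => let j := (i + 2)%nat in
     (2 ^ (2 * j) - 4) * Rabs (B (2 * j)%nat) / INR (fact (2 * j)) * x ^ (2 * j)).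

Definition mid (x : R) : R := 2 * (x / sin x) + x / tan x.

From Stdlib Require Import Reals Factorial Lra Lia Wf_nat.
From Coquelicot Require Import Coquelicot.
Open Scope R_scope.

(* Write x cot x = sum_k u_k x^(2k).  The generating function of the Bernoulli
   numbers gives the expansion of x coth x, and comparing coefficients in
   (x coth x) sinh x = x cosh x and (x cot x) sin x = x cos x identifies u_k with
   (-1)^k 4^k B_(2k)/(2k)!.  The double-angle identity
   (x cot x)^2 = (2x cot 2x)(x cot x) + x^2 becomes a convolution recursion
   showing that v_k = -u_k is positive and that v_(k+1) <= v_k / 9 for k >= 1.
   Since 2 x / sin x + x / tan x = 4 (x/2) cot (x/2) - x cot x, the middle
   expression is sum_k (4^(1-k) - 1) u_k x^(2k), whose coefficients are 3, 0 and
   then exactly the terms of the partial sum.  The tail after degree 2N is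
   therefore positive and dominated by a geometric series, which stays below
   varrho_N x^(2N+1) tan x because x / (1 - 5 x^2/36) < tan x.  Both constants
   are sharp: near pi/2 the tail stays bounded while tan x blows up, and near 0
   the tail is varrho_N x^(2N+2) + O(x^(2N+4)) while x^(2N+1) tan x ~ x^(2N+2). *)

(** * Power series *)

Lemma Rbar_le_of_forall_lt (r : R) (l : Rbar) :
  Rbar_le 0 l -> (forall s, 0 < s < r -> Rbar_le s l) -> Rbar_le r l.
Proof.
  intros H0 H. destruct l as [c| |]; simpl in *; auto.
  apply Rnot_lt_le. intros Hc. specialize (H ((c + r) / 2) ltac:(lra)). simpl in H. lra.
Qed.

Lemma CV_radius_ge_of_bounded (a : nat -> R) (r : R) :
  (forall s, 0 < s < r -> exists M, forall n, Rabs (a n * s ^ n) <= M) ->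
  Rbar_le r (CV_radius a).
Proof.
  intros Hb. apply Rbar_le_of_forall_lt; [apply CV_radius_ge_0|].
  intros s Hs. apply (proj1 (CV_radius_bounded a)), Hb, Hs.
Qed.

Lemma ex_pseries_bounded (a : nat -> R) (s : R) :
  ex_pseries a s -> exists M, forall n, Rabs (a n * s ^ n) <= M.
Proof.
  intros [l Hl]. apply is_pseries_R in Hl.
  destruct (filterlim_bounded (V := R_NormedModule) (fun n => a n * s ^ n)) as [M HM].
  { exists 0. apply ex_series_lim_0. exists l. exact Hl. }
  exists M. exact HM.
Qed.

Lemma CV_radius_ge_of_ex_pseries (a : nat -> R) (r : R) :
  (forall s, 0 < s < r -> ex_pseries a s) -> Rbar_le r (CV_radius a).
Proof.
  intros H. apply CV_radius_ge_of_bounded. intros s Hs. apply ex_pseries_bounded, H, Hs.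
Qed.

Lemma Rabs_lt_CV_radius (a : nat -> R) (r x : R) :
  Rbar_le r (CV_radius a) -> Rabs x < r -> Rbar_lt (Rabs x) (CV_radius a).
Proof. intros Hr Hx. exact (Rbar_lt_le_trans (Rabs x) r _ Hx Hr). Qed.

Lemma ex_pseries_of_CV_radius_ge (a : nat -> R) (r x : R) :
  Rbar_le r (CV_radius a) -> Rabs x < r -> ex_pseries a x.
Proof. intros Hr Hx. exact (CV_radius_inside a x (Rabs_lt_CV_radius a r x Hr Hx)). Qed.

Lemma CV_radius_mult_ge (a b : nat -> R) (r : R) :
  Rbar_le r (CV_radius a) -> Rbar_le r (CV_radius b) ->
  Rbar_le r (CV_radius (PS_mult a b)).
Proof.
  intros Ha Hb. apply CV_radius_ge_of_ex_pseries. intros s Hs.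
  assert (Hsr : Rabs s < r) by (rewrite Rabs_pos_eq; lra).
  apply ex_pseries_mult; eapply Rabs_lt_CV_radius; eassumption.
Qed.

Lemma CV_radius_plus_ge (a b : nat -> R) (r : R) :
  Rbar_le r (CV_radius a) -> Rbar_le r (CV_radius b) ->
  Rbar_le r (CV_radius (PS_plus a b)).
Proof.
  intros Ha Hb. apply CV_radius_ge_of_ex_pseries. intros s Hs.
  assert (Hsr : Rabs s < r) by (rewrite Rabs_pos_eq; lra).
  apply ex_pseries_plus; eapply ex_pseries_of_CV_radius_ge; eassumption.
Qed.

Lemma CV_radius_minus_ge (a b : nat -> R) (r : R) :
  Rbar_le r (CV_radius a) -> Rbar_le r (CV_radius b) ->
  Rbar_le r (CV_radius (PS_minus a b)).
Proof.
  intros Ha Hb. apply CV_radius_ge_of_ex_pseries. intros s Hs.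
  assert (Hsr : Rabs s < r) by (rewrite Rabs_pos_eq; lra).
  apply ex_pseries_minus; eapply ex_pseries_of_CV_radius_ge; eassumption.
Qed.

Lemma CV_radius_le_dominated (a b : nat -> R) :
  (forall n, Rabs (b n) <= Rabs (a n)) -> Rbar_le (CV_radius a) (CV_radius b).
Proof.
  intros Hab. eapply is_lub_Rbar_subset; [| apply CV_radius_bounded | apply CV_radius_bounded].
  intros s [M HM]. exists M. intros n. eapply Rle_trans; [|apply (HM n)].
  rewrite !Rabs_mult. apply Rmult_le_compat_r; [apply Rabs_pos | apply Hab].
Qed.

Lemma CV_radius_scale_ge (a : nat -> R) (c r : R) : 0 < c ->
  Rbar_le r (CV_radius a) -> Rbar_le (r / c) (CV_radius (fun n => c ^ n * a n)).
Proof.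
  intros Hc Ha. apply CV_radius_ge_of_bounded. intros s Hs.
  assert (Hcs : Rabs (c * s) < r).
  { rewrite Rabs_pos_eq by nra. destruct Hs as [_ Hs].
    apply (Rmult_lt_compat_l c) in Hs; [|exact Hc]. field_simplify in Hs; lra. }
  destruct (ex_pseries_bounded a (c * s)) as [M HM].
  { eapply ex_pseries_of_CV_radius_ge; eassumption. }
  exists M. intros n. specialize (HM n). rewrite Rpow_mult_distr in HM.
  replace (c ^ n * a n * s ^ n) with (a n * (c ^ n * s ^ n)) by ring. exact HM.
Qed.

Lemma CV_radius_even_ge (a : nat -> R) (r : R) : 0 <= r ->
  Rbar_le r (CV_radius a) -> Rbar_le (r ^ 2) (CV_radius (fun n => a (2 * n)%nat)).
Proof.
  intros Hr Ha. apply CV_radius_ge_of_bounded. intros s Hs.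
  assert (Hq : Rabs (sqrt s) < r).
  { rewrite Rabs_pos_eq by apply sqrt_pos.
    rewrite <- (sqrt_pow2 r) by lra. apply sqrt_lt_1; lra. }
  destruct (ex_pseries_bounded a (sqrt s)) as [M HM].
  { eapply ex_pseries_of_CV_radius_ge; eassumption. }
  exists M. intros n. specialize (HM (2 * n)%nat).
  rewrite pow_mult, <- Rsqr_pow2, Rsqr_sqrt in HM by lra. exact HM.
Qed.

Lemma CV_radius_odd_ge (a : nat -> R) (r : R) : 0 <= r ->
  Rbar_le r (CV_radius a) -> Rbar_le (r ^ 2) (CV_radius (fun n => a (2 * n + 1)%nat)).
Proof.
  intros Hr Ha. apply CV_radius_ge_of_bounded. intros s Hs.
  assert (Hq0 : 0 < sqrt s) by (apply sqrt_lt_R0; lra).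
  assert (Hq : Rabs (sqrt s) < r).
  { rewrite Rabs_pos_eq by lra.
    rewrite <- (sqrt_pow2 r) by lra. apply sqrt_lt_1; lra. }
  destruct (ex_pseries_bounded a (sqrt s)) as [M HM].
  { eapply ex_pseries_of_CV_radius_ge; eassumption. }
  exists (M / sqrt s). intros n. specialize (HM (2 * n + 1)%nat).
  rewrite pow_add, pow_mult, <- Rsqr_pow2, Rsqr_sqrt, pow_1 in HM by lra.
  apply (Rmult_le_reg_r (sqrt s)); [exact Hq0|].
  replace (M / sqrt s * sqrt s) with M by (field; lra).
  rewrite <- (Rabs_pos_eq (sqrt s)) by lra. rewrite <- Rabs_mult.
  replace (a (2 * n + 1)%nat * s ^ n * sqrt s) with (a (2 * n + 1)%nat * (s ^ n * sqrt s)) by ring.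
  exact HM.
Qed.

Lemma CV_radius_shift (a : nat -> R) (n : nat) :
  CV_radius (fun k => a (n + k)%nat) = CV_radius a.
Proof.
  induction n as [|n IH].
  - apply CV_radius_ext. reflexivity.
  - rewrite <- IH, <- (CV_radius_decr_1 (fun k => a (n + k)%nat)).
    apply CV_radius_ext. intros k. unfold PS_decr_1. f_equal. lia.
Qed.

Lemma continuity_pt_eq_0_right (f : R -> R) (d : R) : 0 < d -> continuity_pt f 0 ->
  (forall y, 0 < y < d -> f y = 0) -> f 0 = 0.
Proof.
  intros Hd Hc Hz. destruct (Req_dec (f 0) 0) as [E|E]; [exact E|].
  destruct (Hc (Rabs (f 0)) (Rabs_pos_lt _ E)) as [al [Hal H]].
  set (y := Rmin al d / 2).
  assert (Hy : 0 < y < d /\ y < al).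
  { pose proof (Rmin_l al d). pose proof (Rmin_r al d).
    assert (0 < Rmin al d) by (apply Rmin_glb_lt; lra). unfold y; lra. }
  specialize (H y). simpl in H. unfold R_dist in H.
  rewrite Hz, Rminus_0_l, Rabs_Ropp in H by lra.
  assert (Rabs (f 0) < Rabs (f 0)); [|lra].
  apply H. split; [split; [exact I | lra] | rewrite Rminus_0_r, Rabs_pos_eq; lra].
Qed.

(* A one-sided identity theorem: our identities hold only at y = x^2 > 0. *)
Lemma PSeries_eq_0_right (a : nat -> R) (d : R) : 0 < d -> Rbar_le d (CV_radius a) ->
  (forall y, 0 < y < d -> PSeries a y = 0) -> forall n, a n = 0.
Proof.
  intros Hd Ha Hz.
  set (shift n k := a (n + k)%nat).
  assert (Hrad : forall n y, Rabs y < d -> Rbar_lt (Rabs y) (CV_radius (shift n))).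
  { intros n y Hy. unfold shift. rewrite CV_radius_shift. eapply Rabs_lt_CV_radius; eassumption. }
  assert (Hhead : forall n, (forall y, 0 < y < d -> PSeries (shift n) y = 0) -> a n = 0).
  { intros n Hn. rewrite <- (Nat.add_0_r n). change (a (n + 0)%nat) with (shift n O).
    rewrite <- PSeries_0. apply (continuity_pt_eq_0_right _ d Hd); [|exact Hn].
    apply PSeries_continuity, Hrad. rewrite Rabs_R0. exact Hd. }
  assert (Hshift : forall n y, 0 < y < d -> PSeries (shift n) y = 0).
  { induction n as [|n IH]; intros y Hy.
    - rewrite <- (Hz y Hy). apply PSeries_ext. reflexivity.
    - assert (Hy' : Rabs y < d) by (rewrite Rabs_pos_eq; lra).
      pose proof (PSeries_decr_1 (shift n) y (CV_radius_inside _ _ (Hrad n y Hy'))) as E.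
      assert (H0 : shift n O = 0) by (unfold shift; rewrite Nat.add_0_r; exact (Hhead n IH)).
      rewrite IH, H0 in E by exact Hy.
      assert (Hdecr : PSeries (PS_decr_1 (shift n)) y = 0) by nra.
      rewrite <- Hdecr. apply PSeries_ext. intros k. unfold PS_decr_1, shift. f_equal. lia. }
  intros n. exact (Hhead n (Hshift n)).
Qed.

Lemma PSeries_eq_right (a c : nat -> R) (d : R) : 0 < d ->
  Rbar_le d (CV_radius a) -> Rbar_le d (CV_radius c) ->
  (forall y, 0 < y < d -> PSeries a y = PSeries c y) -> forall n, a n = c n.
Proof.
  intros Hd Ha Hc Heq n.
  assert (H : PS_minus a c n = 0).
  { apply (PSeries_eq_0_right _ d Hd (CV_radius_minus_ge a c d Ha Hc)).
    intros y Hy. assert (Hy' : Rabs y < d) by (rewrite Rabs_pos_eq; lra).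
    rewrite PSeries_minus, Heq by (auto; eapply ex_pseries_of_CV_radius_ge; eassumption). ring. }
  unfold PS_minus, PS_plus, PS_opp in H. simpl in H. unfold plus, opp in H. simpl in H. lra.
Qed.

Lemma is_series_ratio_bounds (t : nat -> R) (q s : R) :
  0 <= q < 1 -> (forall k, 0 <= t k) -> (forall k, t (S k) <= q * t k) ->
  is_series t s -> t O <= s <= t O / (1 - q).
Proof.
  intros Hq Ht Hr Hs.
  assert (Ht_ex : ex_series t) by (exists s; exact Hs).
  apply is_series_unique in Hs. subst s.
  assert (Hgeom : forall k, t k <= t O * q ^ k).
  { induction k as [|k IH]; simpl; [lra|].
    specialize (Hr k). assert (q * t k <= q * (t O * q ^ k)) by (apply Rmult_le_compat_l; lra). lra. }
  assert (Hsum : forall p, Rabs p < 1 -> Series (fun k => t O * p ^ k) = t O / (1 - p)).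
  { intros p Hp. rewrite Series_scal_l, Series_geom by exact Hp. reflexivity. }
  assert (Hex : forall p, Rabs p < 1 -> ex_series (fun k => t O * p ^ k)).
  { intros p Hp. exact (ex_series_scal_l (t O) _ (ex_series_geom p Hp)). }
  assert (H0 : Rabs 0 < 1) by (rewrite Rabs_R0; lra).
  assert (Hq' : Rabs q < 1) by (rewrite Rabs_pos_eq; lra).
  split.
  - replace (t O) with (t O / (1 - 0)) at 1 by field. rewrite <- (Hsum 0 H0).
    apply Series_le; [|exact Ht_ex].
    intros [|k]; simpl; [specialize (Ht O); lra|]. rewrite Rmult_0_l, Rmult_0_r. split; [lra | apply Ht].
  - rewrite <- (Hsum q Hq'). apply Series_le; [|exact (Hex q Hq')].
    intros k. split; [apply Ht | apply Hgeom].
Qed.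

(** * Elementary trigonometric inequalities *)

Lemma mid_eq_xcot (x : R) : 0 < x < PI / 2 ->
  mid x = 4 * ((x / 2) * cos (x / 2) / sin (x / 2)) - x * cos x / sin x.
Proof.
  intros Hx. pose proof PI_RGT_0. unfold mid, tan.
  set (h := x / 2). assert (Ex : x = 2 * h) by (unfold h; field).
  assert (Hh : 0 < h < PI / 4) by (unfold h; lra). clearbody h. subst x.
  rewrite sin_2a, cos_2a.
  assert (0 < sin h) by (apply sin_gt_0; lra).
  assert (0 < cos h) by (apply cos_gt_0; lra).
  assert (Hc2 : 0 < cos (2 * h)) by (apply cos_gt_0; lra).
  rewrite cos_2a in Hc2. pose proof (sin2_cos2 h) as Hsc. unfold Rsqr in Hsc.
  set (s := sin h) in *. set (c := cos h) in *. clearbody s c.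
  replace (2 * (2 * h / (2 * s * c))) with (2 * (2 * h * (s * s + c * c) / (2 * s * c)))
    by (rewrite Hsc; unfold Rdiv; ring).
  field. repeat split; nra.
Qed.

Lemma cos_ge_1_minus (x : R) : 0 < x < PI / 2 -> 1 - x ^ 2 / 2 <= cos x.
Proof.
  intros Hx. replace x with (2 * (x / 2)) by field. rewrite cos_2a_sin.
  pose proof (sin_lt_x (x / 2) ltac:(lra)).
  assert (0 < sin (x / 2)) by (apply sin_gt_0; pose proof PI_RGT_0; lra).
  assert (sin (x / 2) * sin (x / 2) <= x / 2 * (x / 2)) by (apply Rmult_le_compat; lra).
  nra.
Qed.

Lemma two_sin_gt_x_cos (x : R) : 0 < x < PI / 2 -> x * cos x < 2 * sin x.
Proof.
  intros Hx.
  destruct (MVT_cor2 (fun t => 2 * sin t - t * cos t) (fun t => cos t + t * sin t) 0 x)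
    as [d [Hd1 Hd2]]; [lra | |].
  { intros t _. apply is_derive_Reals. auto_derive; [exact I | ring]. }
  rewrite sin_0, cos_0 in Hd1.
  assert (0 < cos d) by (apply cos_gt_0; lra).
  assert (0 < sin d) by (apply sin_gt_0; lra).
  assert (0 < cos d + d * sin d) by nra. nra.
Qed.

(* Equivalently x / (1 - x^2/4) <= tan x; the derivative of the difference is
   (t/4) (2 sin t - t cos t). *)
Lemma x_cos_le_sin (x : R) : 0 < x < PI / 2 -> x * cos x <= sin x * (1 - x ^ 2 / 4).
Proof.
  intros Hx.
  destruct (MVT_cor2 (fun t => sin t * (1 - t ^ 2 / 4) - t * cos t)
                     (fun t => t / 4 * (2 * sin t - t * cos t)) 0 x) as [d [Hd1 Hd2]]; [lra | |].
  { intros t _. apply is_derive_Reals. auto_derive; [exact I | field]. }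
  rewrite sin_0, cos_0 in Hd1.
  pose proof (two_sin_gt_x_cos d ltac:(lra)).
  assert (0 < d / 4 * (2 * sin d - d * cos d)) by (apply Rmult_lt_0_compat; lra).
  nra.
Qed.

Lemma x_div_lt_tan (x : R) : 0 < x < PI / 2 -> x / (1 - 5 / 36 * x ^ 2) < tan x.
Proof.
  intros Hx. pose proof PI_4. pose proof (x_cos_le_sin x Hx).
  assert (Hc : 0 < cos x) by (apply cos_gt_0; lra).
  assert (Hs : 0 < sin x) by (apply sin_gt_0; lra).
  assert (Hy : 0 < x ^ 2 < 4) by (split; nra).
  unfold tan. apply (Rmult_lt_reg_r ((1 - 5 / 36 * x ^ 2) * cos x)); [nra|].
  replace (x / (1 - 5 / 36 * x ^ 2) * ((1 - 5 / 36 * x ^ 2) * cos x)) with (x * cos x)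
    by (field; lra).
  replace (sin x / cos x * ((1 - 5 / 36 * x ^ 2) * cos x)) with (sin x * (1 - 5 / 36 * x ^ 2))
    by (field; lra).
  nra.
Qed.

Lemma tan_unbounded (M : R) : exists x, 1 <= x < PI / 2 /\ M < tan x.
Proof.
  pose proof PI2_3_2. pose proof (Rabs_pos M). pose proof (Rle_abs M).
  set (e := Rmin (1 / 2) (/ (2 * (Rabs M + 1)))).
  assert (He : 0 < e <= 1 / 2) by (split; [apply Rmin_glb_lt; [|apply Rinv_0_lt_compat]; lra
                                            | apply Rmin_l]).
  assert (HeM : e * (2 * (Rabs M + 1)) <= 1).
  { assert (Hr : e <= / (2 * (Rabs M + 1))) by apply Rmin_r.
    apply (Rmult_le_compat_r (2 * (Rabs M + 1))) in Hr; [|lra].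
    rewrite Rinv_l in Hr by lra. exact Hr. }
  exists (PI / 2 - e). split; [lra|].
  unfold tan. rewrite sin_shift, cos_shift.
  pose proof (sin_lt_x e ltac:(lra)).
  assert (Hs : 0 < sin e) by (apply sin_gt_0; lra).
  pose proof (cos_ge_1_minus e ltac:(lra)).
  apply (Rmult_lt_reg_r (sin e)); [exact Hs|].
  replace (cos e / sin e * sin e) with (cos e) by (field; lra).
  assert (M * sin e <= Rabs M * sin e) by (apply Rmult_le_compat_r; lra).
  assert (Rabs M * sin e <= Rabs M * e) by (apply Rmult_le_compat_l; lra).
  nra.
Qed.

Lemma le_of_lt_tan_near_0 (A c : R) : 0 < A ->
  (forall x, 0 < x < PI / 2 -> A * x < c * tan x) -> A <= c.
Proof.
  intros HA Hc. pose proof PI2_3_2. apply Rnot_lt_le. intros Hlt.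
  assert (Htan : forall x, 0 < x < PI / 2 -> A * x * cos x < c * sin x).
  { intros x Hx. specialize (Hc x Hx). unfold tan in Hc.
    assert (0 < cos x) by (apply cos_gt_0; lra).
    apply (Rmult_lt_compat_r (cos x)) in Hc; [|lra].
    replace (c * (sin x / cos x) * cos x) with (c * sin x) in Hc by (field; lra). exact Hc. }
  destruct (Rle_lt_dec c 0) as [Hc0|Hc0].
  - specialize (Htan 1 ltac:(lra)).
    assert (0 < cos 1) by (apply cos_gt_0; lra).
    assert (0 < sin 1) by (apply sin_gt_0; lra). nra.
  - set (x := Rmin 1 ((A - c) / A)).
    assert (Hx : 0 < x <= 1 /\ x <= (A - c) / A).
    { split; [split|]; [apply Rmin_glb_lt; [lra | apply Rdiv_lt_0_compat; lra]
                        | apply Rmin_l | apply Rmin_r]. }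
    specialize (Htan x ltac:(lra)).
    pose proof (sin_lt_x x ltac:(lra)). pose proof (cos_ge_1_minus x ltac:(lra)).
    assert (HxA : A * x <= A - c).
    { replace (A - c) with (A * ((A - c) / A)) by (field; lra).
      apply Rmult_le_compat_l; lra. }
    assert (Hcos : A * cos x < c).
    { apply (Rmult_lt_reg_r x); [lra|].
      assert (c * sin x < c * x) by (apply Rmult_lt_compat_l; lra). nra. }
    assert (A * x ^ 2 <= A * x) by (apply Rmult_le_compat_l; nra).
    assert (A * (1 - x ^ 2 / 2) <= A * cos x) by (apply Rmult_le_compat_l; lra).
    lra.
Qed.

Definition inv_fact (n : nat) : R := / INR (fact n).
Definition cosh_coef (k : nat) : R := inv_fact (2 * k).
Definition sinhc_coef (k : nat) : R := inv_fact (2 * k + 1).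

Lemma CV_radius_inv_fact (r : R) : Rbar_le r (CV_radius inv_fact).
Proof. apply CV_radius_ge_of_ex_pseries. intros s _. exists (exp s). apply is_exp_Reals. Qed.

Lemma CV_radius_cosh_coef (r : R) : Rbar_le r (CV_radius cosh_coef).
Proof.
  eapply Rbar_le_trans; [|apply (CV_radius_even_ge _ (Rabs r + 1)), CV_radius_inv_fact].
  - simpl. pose proof (Rle_abs r). pose proof (Rabs_pos r). nra.
  - pose proof (Rabs_pos r). lra.
Qed.

Lemma CV_radius_sinhc_coef (r : R) : Rbar_le r (CV_radius sinhc_coef).
Proof.
  eapply Rbar_le_trans; [|apply (CV_radius_odd_ge _ (Rabs r + 1)), CV_radius_inv_fact].
  - simpl. pose proof (Rle_abs r). pose proof (Rabs_pos r). nra.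
  - pose proof (Rabs_pos r). lra.
Qed.

Lemma exp_even_odd (x : R) :
  exp x = PSeries cosh_coef (x ^ 2) + x * PSeries sinhc_coef (x ^ 2).
Proof.
  rewrite exp_Reals. apply PSeries_odd_even;
    apply (ex_pseries_of_CV_radius_ge _ (Rabs (x ^ 2) + 1));
    [apply CV_radius_cosh_coef | lra | apply CV_radius_sinhc_coef | lra].
Qed.

Lemma cosh_PSeries (x : R) : PSeries cosh_coef (x ^ 2) = cosh x.
Proof.
  pose proof (exp_even_odd x) as Ep. pose proof (exp_even_odd (- x)) as Em.
  replace ((- x) ^ 2) with (x ^ 2) in Em by ring. unfold cosh. lra.
Qed.

Lemma sinh_PSeries (x : R) : x * PSeries sinhc_coef (x ^ 2) = sinh x.
Proof.
  pose proof (exp_even_odd x) as Ep. pose proof (exp_even_odd (- x)) as Em.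
  replace ((- x) ^ 2) with (x ^ 2) in Em by ring. unfold sinh. lra.
Qed.

Lemma CV_radius_sin_n (r : R) : Rbar_le r (CV_radius sin_n).
Proof.
  apply CV_radius_ge_of_ex_pseries. intros s _. destruct (exist_sin s) as [l Hl].
  exists l. apply is_pseries_R, is_series_Reals, Hl.
Qed.

Lemma sin_PSeries (x : R) : sin x = x * PSeries sin_n (x ^ 2).
Proof.
  unfold sin. destruct (exist_sin (Rsqr x)) as [l Hl]. f_equal.
  symmetry. apply is_pseries_unique, is_pseries_R, is_series_Reals.
  rewrite <- Rsqr_pow2. exact Hl.
Qed.

Lemma cos_PSeries (x : R) : cos x = PSeries cos_n (x ^ 2).
Proof.
  unfold cos. destruct (exist_cos (Rsqr x)) as [l Hl].
  symmetry. apply is_pseries_unique, is_pseries_R, is_series_Reals.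
  rewrite <- Rsqr_pow2. exact Hl.
Qed.

Definition gf (t : R) : R := t / (exp t - 1).

Lemma gf_opp (t : R) : 0 < t -> gf (- t) = gf t + t.
Proof.
  intros Ht. unfold gf. rewrite exp_Ropp.
  assert (H1 : 1 < exp t) by (rewrite <- exp_0; apply exp_increasing; lra).
  assert (H2 : / exp t < 1).
  { apply (Rmult_lt_reg_l (exp t)); [lra|]. rewrite Rinv_r; lra. }
  field. split; lra.
Qed.

Lemma gf_mul_sinh (x : R) : 0 < x -> (gf (2 * x) + x) * sinh x = x * cosh x.
Proof.
  intros Hx. unfold gf, sinh, cosh.
  rewrite exp_Ropp. replace (2 * x) with (x + x) by ring. rewrite exp_plus.
  assert (H1 : 1 < exp x) by (rewrite <- exp_0; apply exp_increasing; lra).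
  field. split; [lra|]. nra.
Qed.

Lemma PSeries_scale_coef (a : nat -> R) (c y : R) :
  PSeries (fun k => c ^ k * a k) y = PSeries a (c * y).
Proof. unfold PSeries. apply Series_ext. intros k. rewrite Rpow_mult_distr. ring. Qed.

Definition delta1 (n : nat) : R := if Nat.eqb n 1 then 1 else 0.

Lemma CV_radius_delta1 (r : R) : Rbar_le r (CV_radius delta1).
Proof.
  eapply Rbar_le_trans; [apply CV_radius_inv_fact | apply CV_radius_le_dominated].
  intros k. unfold delta1, inv_fact.
  rewrite (Rabs_pos_eq (/ _)) by (left; apply Rinv_0_lt_compat, lt_0_INR, lt_O_fact).
  destruct (Nat.eqb_spec k 1) as [->|_].
  - simpl. rewrite Rabs_R1. lra.
  - rewrite Rabs_R0. left; apply Rinv_0_lt_compat, lt_0_INR, lt_O_fact.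
Qed.

Lemma delta1_PSeries (y : R) : PSeries delta1 y = y.
Proof.
  assert (H1 : ex_pseries delta1 y).
  { apply (ex_pseries_of_CV_radius_ge _ (Rabs y + 1)); [apply CV_radius_delta1 | lra]. }
  assert (H2 : ex_pseries (PS_decr_1 delta1) y).
  { apply (ex_pseries_of_CV_radius_ge _ (Rabs y + 1)); [|lra].
    rewrite CV_radius_decr_1. apply CV_radius_delta1. }
  rewrite (PSeries_decr_1 delta1 y H1), (PSeries_decr_1 (PS_decr_1 delta1) y H2).
  unfold PS_decr_1, delta1. simpl. rewrite PSeries_const_0. ring.
Qed.

(** * The coefficients of x cot x *)

Section Bernoulli.

Variable B : nat -> R.
Hypothesis HB : bernoulli_gf B.

Definition gf_coef (n : nat) : R := B n / INR (fact n).

Lemma is_pseries_gf (t : R) : t <> 0 -> Rabs t < 2 * PI -> is_pseries gf_coef t (gf t).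
Proof.
  intros H0 Ht. apply is_pseries_R. eapply is_series_ext; [|apply is_series_Reals, (HB t H0 Ht)].
  intros n. unfold gf_coef. simpl. unfold Rdiv. ring.
Qed.

Lemma CV_radius_gf_coef : Rbar_le (2 * PI) (CV_radius gf_coef).
Proof.
  apply CV_radius_ge_of_ex_pseries. intros s Hs. exists (gf s).
  apply is_pseries_gf; [lra | rewrite Rabs_pos_eq; lra].
Qed.

Lemma gf_even_part (t : R) : 0 < t < 2 * PI ->
  PSeries (fun k => gf_coef (2 * k)) (t ^ 2) = gf t + t / 2.
Proof.
  intros Ht. pose proof PI_RGT_0.
  assert (Hr : Rabs (t ^ 2) < (2 * PI) ^ 2).
  { rewrite Rabs_pos_eq by (apply pow_le; lra). nra. }
  assert (He := ex_pseries_of_CV_radius_ge _ _ _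
                  (CV_radius_even_ge _ (2 * PI) ltac:(lra) CV_radius_gf_coef) Hr).
  assert (Ho := ex_pseries_of_CV_radius_ge _ _ _
                  (CV_radius_odd_ge _ (2 * PI) ltac:(lra) CV_radius_gf_coef) Hr).
  pose proof (PSeries_odd_even gf_coef t He Ho) as Ep.
  pose proof (PSeries_odd_even gf_coef (- t)) as Em.
  replace ((- t) ^ 2) with (t ^ 2) in Em by ring. specialize (Em He Ho).
  rewrite (is_pseries_unique _ _ _ (is_pseries_gf t ltac:(lra)
             ltac:(rewrite Rabs_pos_eq; lra))) in Ep.
  rewrite (is_pseries_unique _ _ _ (is_pseries_gf (- t) ltac:(lra)
             ltac:(rewrite Rabs_Ropp, Rabs_pos_eq; lra))) in Em.
  rewrite gf_opp in Em by lra. lra.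
Qed.

Definition xcoth_coef (k : nat) : R := 4 ^ k * gf_coef (2 * k).

Lemma CV_radius_xcoth_coef : Rbar_le (PI ^ 2) (CV_radius xcoth_coef).
Proof.
  replace (PI ^ 2) with ((2 * PI) ^ 2 / 4) by field.
  apply CV_radius_scale_ge; [lra|].
  apply CV_radius_even_ge; [pose proof PI_RGT_0; lra | exact CV_radius_gf_coef].
Qed.

Lemma xcoth_PSeries (x : R) : 0 < x < PI ->
  PSeries xcoth_coef (x ^ 2) * sinh x = x * cosh x.
Proof.
  intros Hx. unfold xcoth_coef. rewrite PSeries_scale_coef.
  replace (4 * x ^ 2) with ((2 * x) ^ 2) by ring.
  rewrite gf_even_part by lra. replace (2 * x / 2) with x by field.
  apply gf_mul_sinh; lra.
Qed.

Lemma xcoth_sinhc_coef (n : nat) : PS_mult xcoth_coef sinhc_coef n = cosh_coef n.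
Proof.
  pose proof PI_RGT_0 as Hpi.
  revert n. apply (PSeries_eq_right _ _ (PI ^ 2)).
  - nra.
  - apply CV_radius_mult_ge; [exact CV_radius_xcoth_coef | apply CV_radius_sinhc_coef].
  - apply CV_radius_cosh_coef.
  - intros y Hy. set (x := sqrt y).
    assert (Hx : 0 < x < PI).
    { split; [apply sqrt_lt_R0; lra|].
      rewrite <- (sqrt_pow2 PI) by lra. apply sqrt_lt_1; lra. }
    assert (Ey : y = x ^ 2) by (unfold x; rewrite <- Rsqr_pow2, Rsqr_sqrt; lra).
    rewrite PSeries_mult.
    2: { apply (Rabs_lt_CV_radius _ (PI ^ 2)); [exact CV_radius_xcoth_coef|].
         rewrite Rabs_pos_eq; lra. }
    2: { apply (Rabs_lt_CV_radius _ (y + 1)); [apply CV_radius_sinhc_coef|].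
         rewrite Rabs_pos_eq; lra. }
    rewrite Ey, cosh_PSeries. apply (Rmult_eq_reg_l x); [|lra].
    rewrite <- xcoth_PSeries by exact Hx. rewrite <- sinh_PSeries. ring.
Qed.

Definition xcot_coef (k : nat) : R := (-1) ^ k * xcoth_coef k.

Lemma CV_radius_xcot_coef : Rbar_le (PI ^ 2) (CV_radius xcot_coef).
Proof.
  eapply Rbar_le_trans; [exact CV_radius_xcoth_coef | apply CV_radius_le_dominated].
  intros k. unfold xcot_coef. rewrite Rabs_mult, pow_1_abs. lra.
Qed.

Lemma xcot_sin_coef (n : nat) : PS_mult xcot_coef sin_n n = cos_n n.
Proof.
  unfold PS_mult.
  transitivity (sum_f_R0 (fun k => xcoth_coef k * sinhc_coef (n - k) * (-1) ^ n) n).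
  { apply sum_eq. intros k Hk. unfold xcot_coef, sin_n, sinhc_coef, inv_fact.
    replace ((-1) ^ n) with ((-1) ^ k * (-1) ^ (n - k)) by (rewrite <- pow_add; f_equal; lia).
    unfold Rdiv. ring. }
  rewrite <- scal_sum. pose proof (xcoth_sinhc_coef n) as H. unfold PS_mult in H.
  rewrite H. unfold cosh_coef, cos_n, inv_fact, Rdiv. ring.
Qed.

Lemma xcot_PSeries (x : R) : 0 < x < PI -> PSeries xcot_coef (x ^ 2) = x * cos x / sin x.
Proof.
  intros Hx. pose proof (sin_gt_0 x (proj1 Hx) (proj2 Hx)) as Hs.
  assert (Hy : Rabs (x ^ 2) < PI ^ 2) by (rewrite Rabs_pos_eq by (apply pow_le; lra); nra).
  assert (E : PSeries xcot_coef (x ^ 2) * PSeries sin_n (x ^ 2) = PSeries cos_n (x ^ 2)).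
  { rewrite <- PSeries_mult.
    - apply PSeries_ext, xcot_sin_coef.
    - eapply Rabs_lt_CV_radius; [exact CV_radius_xcot_coef | exact Hy].
    - apply (Rabs_lt_CV_radius _ (Rabs (x ^ 2) + 1)); [apply CV_radius_sin_n | lra]. }
  rewrite cos_PSeries, sin_PSeries, <- E. rewrite sin_PSeries in Hs.
  assert (PSeries sin_n (x ^ 2) <> 0) by (intros H; rewrite H in Hs; lra).
  field. split; lra.
Qed.
(* (x cot x)^2 = (2x cot 2x)(x cot x) + x^2, read coefficientwise in y = x^2. *)
Lemma xcot_double_coef (n : nat) :
  PS_mult xcot_coef xcot_coef n
  = PS_plus (PS_mult (fun k => 4 ^ k * xcot_coef k) xcot_coef) delta1 n.
Proof.
  pose proof PI_RGT_0 as Hpi.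
  assert (Hd : 0 < PI ^ 2 / 4) by nra.
  assert (Hu : Rbar_le (PI ^ 2 / 4) (CV_radius xcot_coef)).
  { eapply Rbar_le_trans; [|exact CV_radius_xcot_coef]. simpl. lra. }
  assert (Hu4 : Rbar_le (PI ^ 2 / 4) (CV_radius (fun k => 4 ^ k * xcot_coef k))).
  { apply CV_radius_scale_ge; [lra | exact CV_radius_xcot_coef]. }
  revert n. apply (PSeries_eq_right _ _ (PI ^ 2 / 4) Hd).
  - apply CV_radius_mult_ge; exact Hu.
  - apply CV_radius_plus_ge; [apply CV_radius_mult_ge; assumption | apply CV_radius_delta1].
  - intros y Hy.
    assert (Hy' : Rabs y < PI ^ 2 / 4) by (rewrite Rabs_pos_eq; lra).
    rewrite PSeries_plus.
    2: { apply (ex_pseries_of_CV_radius_ge _ (PI ^ 2 / 4)); [|exact Hy'].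
         apply CV_radius_mult_ge; assumption. }
    2: { apply (ex_pseries_of_CV_radius_ge _ (Rabs y + 1)); [apply CV_radius_delta1 | lra]. }
    rewrite !PSeries_mult by (eapply Rabs_lt_CV_radius; eassumption).
    rewrite delta1_PSeries, PSeries_scale_coef.
    set (x := sqrt y).
    assert (Hx : 0 < x < PI / 2).
    { split; [apply sqrt_lt_R0; lra|].
      rewrite <- (sqrt_pow2 (PI / 2)) by lra. apply sqrt_lt_1; lra. }
    assert (Ey : y = x ^ 2) by (unfold x; rewrite <- Rsqr_pow2, Rsqr_sqrt; lra).
    replace (4 * y) with ((2 * x) ^ 2) by (rewrite Ey; ring). rewrite Ey.
    rewrite !xcot_PSeries by lra. rewrite sin_2a, cos_2a.
    assert (0 < sin x) by (apply sin_gt_0; lra).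
    assert (0 < cos x) by (apply cos_gt_0; lra).
    field. lra.
Qed.

Lemma xcot_coef_convolution (n : nat) :
  sum_f_R0 (fun k => (4 ^ k - 1) * xcot_coef k * xcot_coef (n - k)) n = - delta1 n.
Proof.
  pose proof (xcot_double_coef n) as H. unfold PS_mult, PS_plus in H. simpl in H.
  unfold plus in H. simpl in H.
  replace (sum_f_R0 (fun k => (4 ^ k - 1) * xcot_coef k * xcot_coef (n - k)) n) with
    (sum_f_R0 (fun k => 4 ^ k * xcot_coef k * xcot_coef (n - k)) n
     - sum_f_R0 (fun k => xcot_coef k * xcot_coef (n - k)) n).
  - lra.
  - rewrite <- minus_sum. apply sum_eq. intros k _. ring.
Qed.

Lemma xcot_coef_0 : xcot_coef 0 = 1.
Proof.
  pose proof (xcoth_sinhc_coef 0) as H. unfold PS_mult, sinhc_coef, cosh_coef, inv_fact in H.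
  simpl in H. rewrite Rinv_1 in H. unfold xcot_coef. simpl. lra.
Qed.

Definition neg_xcot_coef (k : nat) : R := - xcot_coef k.

Lemma neg_xcot_coef_1 : neg_xcot_coef 1 = 1 / 3.
Proof.
  pose proof (xcot_coef_convolution 1) as H. simpl in H.
  rewrite xcot_coef_0 in H. unfold delta1 in H. simpl in H. unfold neg_xcot_coef. lra.
Qed.

Lemma neg_xcot_coef_rec (m : nat) :
  (4 ^ (m + 2) - 1) * neg_xcot_coef (m + 2) =
  sum_f_R0 (fun j => (4 ^ (j + 1) - 1) * neg_xcot_coef (j + 1) * neg_xcot_coef (m + 1 - j)) m.
Proof.
  pose proof (xcot_coef_convolution (S (S m))) as H.
  rewrite tech5, decomp_sum in H by lia. simpl pred in H.
  rewrite Nat.sub_diag, xcot_coef_0 in H. unfold delta1 in H. simpl Nat.eqb in H.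
  rewrite (sum_eq _ (fun j => (4 ^ (j + 1) - 1) * neg_xcot_coef (j + 1) * neg_xcot_coef (m + 1 - j))) in H.
  - replace (m + 2)%nat with (S (S m)) by lia. unfold neg_xcot_coef at 1.
    simpl pow in H. change (4 ^ S (S m)) with (4 * (4 * 4 ^ m)). lra.
  - intros j _. unfold neg_xcot_coef.
    replace (S (S m) - S j)%nat with (m + 1 - j)%nat by lia.
    replace (S j) with (j + 1)%nat by lia. ring.
Qed.

Lemma pow4_gt_1 (k : nat) : (0 < k)%nat -> 1 < 4 ^ k.
Proof. intros Hk. apply Rlt_pow_R1; [lra | exact Hk]. Qed.

Lemma neg_xcot_coef_pos (n : nat) : (1 <= n)%nat -> 0 < neg_xcot_coef n.
Proof.
  induction n as [n IH] using (well_founded_induction lt_wf). intros Hn.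
  destruct n as [|[|m]]; [lia | rewrite neg_xcot_coef_1; lra|].
  pose proof (neg_xcot_coef_rec m) as E. replace (m + 2)%nat with (S (S m)) in E by lia.
  assert (Hsum : 0 < sum_f_R0 (fun j => (4 ^ (j + 1) - 1) * neg_xcot_coef (j + 1)
                                          * neg_xcot_coef (m + 1 - j)) m).
  { apply tech1. intros j Hj.
    pose proof (pow4_gt_1 (j + 1) ltac:(lia)).
    assert (0 < neg_xcot_coef (j + 1)) by (apply IH; lia).
    assert (0 < neg_xcot_coef (m + 1 - j)) by (apply IH; lia).
    apply Rmult_lt_0_compat; [apply Rmult_lt_0_compat|]; lra. }
  pose proof (pow4_gt_1 (S (S m)) ltac:(lia)). nra.
Qed.

(* The true ratio tends to 1/PI^2; 1/9 is what the recursion gives directly, and it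
   already makes the ratio of consecutive mid_coef at most 5/36 < 1/4. *)
Lemma neg_xcot_coef_ratio (n : nat) : (1 <= n)%nat -> neg_xcot_coef (S n) <= neg_xcot_coef n / 9.
Proof.
  induction n as [n IH] using (well_founded_induction lt_wf). intros Hn.
  destruct n as [|[|m]]; [lia| |].
  - pose proof (neg_xcot_coef_rec 0) as E. simpl in E. rewrite neg_xcot_coef_1 in E |- *.
    simpl. lra.
  - (* Split off the term j = m + 1 of the recursion, which carries v 1 = 1/3;
       by induction the remaining sum is at most 1/9 of the recursion for v (m + 2). *)
    set (v := neg_xcot_coef).
    pose proof (neg_xcot_coef_rec (S m)) as E. pose proof (neg_xcot_coef_rec m) as E'.
    rewrite tech5 in E. replace (S m + 1 - S m)%nat with 1%nat in E by lia.
    rewrite neg_xcot_coef_1 in E. fold v in E, E'.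
    replace (S m + 2)%nat with (S (S (S m))) in E by lia.
    replace (S m + 1)%nat with (S (S m)) in E by lia.
    replace (m + 2)%nat with (S (S m)) in E' by lia.
    assert (Hle : sum_f_R0 (fun j => (4 ^ (j + 1) - 1) * v (j + 1)%nat * v (S (S m) - j)%nat) m
                  <= sum_f_R0 (fun j => (4 ^ (j + 1) - 1) * v (j + 1)%nat * v (m + 1 - j)%nat * / 9) m).
    { apply sum_Rle. intros j Hj.
      pose proof (pow4_gt_1 (j + 1) ltac:(lia)).
      assert (0 < v (j + 1)%nat) by (apply neg_xcot_coef_pos; lia).
      assert (Hr : v (S (m + 1 - j)) <= v (m + 1 - j)%nat / 9) by (apply IH; lia).
      replace (S (S m) - j)%nat with (S (m + 1 - j)) by lia.
      assert (0 < (4 ^ (j + 1) - 1) * v (j + 1)%nat) by (apply Rmult_lt_0_compat; lra).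
      unfold Rdiv in Hr. nra. }
    rewrite <- scal_sum, <- E' in Hle.
    assert (Hv : 0 < v (S (S m))) by (apply neg_xcot_coef_pos; lia).
    set (P := 4 ^ S (S m)) in *.
    assert (HP : 4 ^ S (S (S m)) = 4 * P) by (unfold P; simpl; ring).
    assert (1 < P) by (apply pow4_gt_1; lia).
    rewrite HP in E.
    assert (H4P : (4 * P - 1) * v (S (S (S m))) <= (4 * P - 1) * (v (S (S m)) / 9)) by nra.
    apply (Rmult_le_reg_l (4 * P - 1)); lra.
Qed.

(** * Expansion of 2 x / sin x + x / tan x *)

Definition mid_coef (k : nat) : R := (4 * (/ 4) ^ k - 1) * xcot_coef k.

Lemma mid_is_series (x : R) : 0 < x < PI / 2 ->
  is_series (fun k => mid_coef k * (x ^ 2) ^ k) (mid x).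
Proof.
  intros Hx. pose proof PI_RGT_0.
  assert (Hser : forall y, 0 < y < PI -> is_series (fun k => xcot_coef k * (y ^ 2) ^ k)
                                               (y * cos y / sin y)).
  { intros y Hy. rewrite <- xcot_PSeries by exact Hy. apply is_pseries_R, PSeries_correct.
    apply (ex_pseries_of_CV_radius_ge _ (PI ^ 2)); [exact CV_radius_xcot_coef|].
    rewrite Rabs_pos_eq by (apply pow_le; lra). nra. }
  rewrite mid_eq_xcot by exact Hx.
  pose proof (is_series_scal 4 _ _ (Hser (x / 2) ltac:(lra))) as Hhalf.
  pose proof (is_series_minus _ _ _ _ Hhalf (Hser x ltac:(lra))) as Hdiff.
  eapply is_series_ext; [|exact Hdiff].
  intros k. replace ((x / 2) ^ 2) with (/ 4 * x ^ 2) by field.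
  rewrite Rpow_mult_distr. unfold mid_coef, plus, opp, scal. simpl. unfold mult. simpl. ring.
Qed.

Lemma abs_bernoulli_even (k : nat) : (1 <= k)%nat ->
  Rabs (B (2 * k)) / INR (fact (2 * k)) = neg_xcot_coef k / 4 ^ k.
Proof.
  intros Hk. pose proof (neg_xcot_coef_pos k Hk) as Hv.
  assert (Hf : 0 < INR (fact (2 * k))) by apply lt_0_INR, lt_O_fact.
  assert (H4 : 0 < 4 ^ k) by (apply pow_lt; lra).
  assert (E : neg_xcot_coef k = Rabs (xcot_coef k)).
  { unfold neg_xcot_coef in *. rewrite Rabs_left; lra. }
  rewrite E. unfold xcot_coef, xcoth_coef, gf_coef.
  rewrite !Rabs_mult, pow_1_abs, (Rabs_pos_eq (4 ^ k)) by lra.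
  unfold Rdiv. rewrite Rabs_mult, (Rabs_pos_eq (/ _)) by (left; apply Rinv_0_lt_compat, Hf).
  field. lra.
Qed.

Lemma mid_coef_eq (k : nat) : mid_coef k = (1 - 4 * (/ 4) ^ k) * neg_xcot_coef k.
Proof. unfold mid_coef, neg_xcot_coef. ring. Qed.

Lemma mid_coef_term (k : nat) (x : R) : (1 <= k)%nat ->
  (2 ^ (2 * k) - 4) * Rabs (B (2 * k)) / INR (fact (2 * k)) * x ^ (2 * k)
  = mid_coef k * (x ^ 2) ^ k.
Proof.
  intros Hk. rewrite mid_coef_eq.
  unfold Rdiv at 1. rewrite Rmult_assoc with (r2 := Rabs _), <- (Rdiv_def (Rabs _)).
  rewrite abs_bernoulli_even by exact Hk.
  rewrite !pow_mult, pow_inv. replace (2 ^ 2) with 4 by ring.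
  field. apply pow_nonzero. lra.
Qed.

Lemma mid_coef_sum (N : nat) (x : R) : (1 <= N)%nat ->
  sum_f_R0 (fun k => mid_coef k * (x ^ 2) ^ k) N = 3 + partial_sum B N x.
Proof.
  intros HN. induction N as [|[|N] IH]; [lia| |].
  - unfold mid_coef, partial_sum. simpl. rewrite xcot_coef_0. field.
  - rewrite tech5, IH, <- mid_coef_term by lia.
    unfold partial_sum. replace (S (S N) - 1)%nat with (S N) by lia.
    replace (S N - 1)%nat with N by lia. cbn [sum_lt].
    replace (N + 2)%nat with (S (S N)) by lia. ring.
Qed.

Lemma varrho_eq (N : nat) : (1 <= N)%nat ->
  4 * (2 ^ (2 * N) - 1) * Rabs (B (2 * N + 2)) / INR (fact (2 * N + 2)) = mid_coef (S N).
Proof.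
  intros HN. rewrite mid_coef_eq. replace (2 * N + 2)%nat with (2 * S N)%nat by lia.
  unfold Rdiv at 1. rewrite Rmult_assoc with (r2 := Rabs _), <- (Rdiv_def (Rabs _)).
  rewrite abs_bernoulli_even by lia.
  rewrite pow_mult, pow_inv. replace (2 ^ 2) with 4 by ring. simpl pow.
  field. apply pow_nonzero. lra.
Qed.

Lemma quarter_pow_le (k : nat) : (2 <= k)%nat -> 0 < (/ 4) ^ k <= / 16.
Proof.
  intros Hk. split; [apply pow_lt; lra|]. rewrite pow_inv.
  apply Rinv_le_contravar; [lra|]. replace 16 with (4 ^ 2) by ring. apply Rle_pow; [lra | exact Hk].
Qed.

Lemma mid_coef_pos (k : nat) : (2 <= k)%nat -> 0 < mid_coef k.
Proof.
  intros Hk. rewrite mid_coef_eq. pose proof (neg_xcot_coef_pos k ltac:(lia)).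
  pose proof (quarter_pow_le k Hk). apply Rmult_lt_0_compat; lra.
Qed.

Lemma mid_coef_ratio (k : nat) : (2 <= k)%nat -> mid_coef (S k) <= 5 / 36 * mid_coef k.
Proof.
  intros Hk. rewrite !mid_coef_eq.
  pose proof (neg_xcot_coef_pos k ltac:(lia)). pose proof (neg_xcot_coef_pos (S k) ltac:(lia)).
  pose proof (neg_xcot_coef_ratio k ltac:(lia)). pose proof (quarter_pow_le k Hk).
  simpl pow. replace (4 * (/ 4 * (/ 4) ^ k)) with ((/ 4) ^ k) by field. nra.
Qed.

Lemma mid_tail_bounds (N : nat) (x : R) : (1 <= N)%nat -> 0 < x < PI / 2 ->
  mid_coef (S N) * (x ^ 2) ^ S N <= mid x - (3 + partial_sum B N x)
  <= mid_coef (S N) * (x ^ 2) ^ S N / (1 - 5 / 36 * x ^ 2).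
Proof.
  intros HN Hx. pose proof PI_RGT_0. pose proof PI_4.
  set (y := x ^ 2). assert (Hy : 0 < y < 4) by (unfold y; split; nra).
  set (t k := mid_coef (S N + k) * y ^ (S N + k)).
  assert (Ht : is_series t (mid x - (3 + partial_sum B N x))).
  { apply (is_series_incr_n (fun k => mid_coef k * y ^ k)); [lia|].
    pose proof (mid_coef_sum N x HN) as Esum. fold y in Esum.
    rewrite sum_n_Reals. simpl pred. rewrite Esum.
    match goal with |- is_series _ ?l => replace l with (mid x) by (unfold plus; simpl; ring) end.
    apply mid_is_series, Hx. }
  replace (mid_coef (S N) * y ^ S N) with (t O) by (unfold t; rewrite Nat.add_0_r; reflexivity).
  apply (is_series_ratio_bounds t); [lra | | | exact Ht].
  - intros k. unfold t. apply Rmult_le_pos; [left; apply mid_coef_pos; lia | apply pow_le; lra].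
  - intros k. unfold t. rewrite <- plus_n_Sm, <- tech_pow_Rmult.
    pose proof (mid_coef_ratio (S N + k) ltac:(lia)) as Hr.
    pose proof (pow_le y (S N + k) ltac:(lra)) as Hp.
    set (p := y ^ (S N + k)) in *. assert (0 <= y * p) by nra. nra.
Qed.

Lemma pow_sq_succ (N : nat) (x : R) : (x ^ 2) ^ S N = x ^ (2 * N + 1) * x.
Proof.
  rewrite <- pow_mult. replace (2 * S N)%nat with (S (2 * N + 1)) by lia.
  rewrite <- tech_pow_Rmult. ring.
Qed.

Lemma mid_bounds (N : nat) (x : R) : (1 <= N)%nat -> 0 < x < PI / 2 ->
  3 + partial_sum B N x < mid x /\
  mid x < 3 + partial_sum B N x + mid_coef (S N) * x ^ (2 * N + 1) * tan x.
Proof.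
  intros HN Hx. pose proof PI_RGT_0. pose proof PI_4.
  destruct (mid_tail_bounds N x HN Hx) as [Hlo Hhi].
  assert (HA : 0 < mid_coef (S N)) by (apply mid_coef_pos; lia).
  assert (Hp : 0 < x ^ (2 * N + 1)) by (apply pow_lt; lra).
  assert (Hy : 0 < 1 - 5 / 36 * x ^ 2) by nra.
  rewrite pow_sq_succ in Hlo, Hhi. split.
  - assert (0 < mid_coef (S N) * (x ^ (2 * N + 1) * x)) by (apply Rmult_lt_0_compat; nra). lra.
  - assert (Htan : x ^ (2 * N + 1) * x / (1 - 5 / 36 * x ^ 2) < x ^ (2 * N + 1) * tan x).
    { unfold Rdiv. rewrite Rmult_assoc. apply Rmult_lt_compat_l; [exact Hp|].
      apply x_div_lt_tan, Hx. }
    apply (Rmult_lt_compat_l (mid_coef (S N))) in Htan; [|exact HA].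
    unfold Rdiv in *. nra.
Qed.

Lemma mid_lower_const_optimal (N : nat) (c : R) : (1 <= N)%nat ->
  (forall x, 0 < x < PI / 2 -> 3 + partial_sum B N x + c * x ^ (2 * N + 1) * tan x < mid x) ->
  c <= 0.
Proof.
  intros HN Hc. apply Rnot_lt_le. intros Hc0. pose proof PI_4.
  set (K := mid_coef (S N) * (4 ^ S N / (1 - 5 / 36 * 4))).
  destruct (tan_unbounded (K / c)) as [x [Hx Htan]].
  specialize (Hc x ltac:(lra)).
  destruct (mid_tail_bounds N x HN ltac:(lra)) as [_ Hhi].
  assert (HA : 0 < mid_coef (S N)) by (apply mid_coef_pos; lia).
  assert (Hy : 0 < x ^ 2 < 4) by (assert (x < 2) by lra; split; nra).
  assert (Htail : mid_coef (S N) * (x ^ 2) ^ S N / (1 - 5 / 36 * x ^ 2) <= K).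
  { unfold K, Rdiv. rewrite Rmult_assoc. apply Rmult_le_compat_l; [lra|].
    apply Rmult_le_compat; [apply pow_le; lra | left; apply Rinv_0_lt_compat; lra | |].
    - apply pow_incr. lra.
    - apply Rinv_le_contravar; lra. }
  assert (Hpow : 1 <= x ^ (2 * N + 1)) by (apply pow_R1_Rle; lra).
  assert (HK : K < c * tan x).
  { apply (Rmult_lt_compat_l c) in Htan; [|exact Hc0].
    replace (c * (K / c)) with K in Htan by (field; lra). exact Htan. }
  assert (0 < tan x) by (unfold K in HK; pose proof (pow_lt 4 (S N)); nra).
  assert (c * tan x <= c * x ^ (2 * N + 1) * tan x).
  { assert (0 < c * tan x) by (apply Rmult_lt_0_compat; lra). nra. }
  lra.
Qed.

Lemma mid_upper_const_optimal (N : nat) (c : R) : (1 <= N)%nat ->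
  (forall x, 0 < x < PI / 2 -> mid x < 3 + partial_sum B N x + c * x ^ (2 * N + 1) * tan x) ->
  mid_coef (S N) <= c.
Proof.
  intros HN Hc. apply le_of_lt_tan_near_0; [apply mid_coef_pos; lia|].
  intros x Hx. specialize (Hc x Hx).
  destruct (mid_tail_bounds N x HN Hx) as [Hlo _]. rewrite pow_sq_succ in Hlo.
  assert (Hp : 0 < x ^ (2 * N + 1)) by (apply pow_lt; lra).
  apply (Rmult_lt_reg_l (x ^ (2 * N + 1))); [exact Hp|]. nra.
Qed.

End Bernoulli.

Theorem theorem10 (B : nat -> R) (HB : bernoulli_gf B) (N : nat) (HN : (1 <= N)%nat) :
  let rho := 0 in
  let varrho := 4 * (2 ^ (2 * N) - 1) * Rabs (B (2 * N + 2)%nat) / INR (fact (2 * N + 2)) in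
  (forall x : R, 0 < x < PI / 2 ->
     3 + partial_sum B N x + rho * x ^ (2 * N + 1) * tan x < mid x /\
     mid x < 3 + partial_sum B N x + varrho * x ^ (2 * N + 1) * tan x)
  /\ (forall c : R,
        (forall x : R, 0 < x < PI / 2 ->
           3 + partial_sum B N x + c * x ^ (2 * N + 1) * tan x < mid x) ->
        c <= rho)
  /\ (forall c : R,
        (forall x : R, 0 < x < PI / 2 ->
           mid x < 3 + partial_sum B N x + c * x ^ (2 * N + 1) * tan x) ->
        varrho <= c).
Proof.
  intros rho varrho. unfold rho, varrho. rewrite (varrho_eq B HB N HN).
  split; [|split].
  - intros x Hx. rewrite Rmult_0_l, Rmult_0_l, Rplus_0_r. exact (mid_bounds B HB N x HN Hx).
  - intros c. exact (mid_lower_const_optimal B HB N c HN).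
  - intros c. exact (mid_upper_const_optimal B HB N c HN).
Qed.
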